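(* For every positive integer $k$, \[ \sum_{i+t\le k}B_{2t}\,2^{2t}\binom{2k+2}{2t,\;2i+1,\;2k-2t-2i+1}=2^{2k+1}(k+1), \] where the sum ranges over all pairs of nonnegative integers $i,t$ with $i+t\le k$.
   Context: The Bernoulli numbers $B_m$ ($m\ge 0$) are defined by $\dfrac{x}{e^x-1}=\sum_{m=0}^\infty B_m\dfrac{x^m}{m!}$. The trinomial coefficient is $\binom{n}{r_1,r_2,r_3}=\dfrac{n!}{r_1!\,r_2!\,r_3!}$ for nonnegative integers $r_1+r_2+r_3=n$. *)

From HB Require Import structures.
From mathcomp Require Import all_boot all_order all_algebra.
Set Implicit Arguments. Unset Strict Implicit. Unset Printing Implicit Defensive.
Import Order.TTheory GRing.Theory Num.Theory.
Local Open Scope ring_scope.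

(* Bernoulli numbers B_0, ..., B_n (as rationals), via the coefficient
   identity of x = (e^x - 1) * (sum_m B_m x^m/m!):
   for m >= 1, sum_{j=0}^{m} C(m+1,j) B_j = 0, and B_0 = 1.
   (Convention B_1 = -1/2, matching x/(e^x-1).) *)
Fixpoint bern_seq (n : nat) : seq rat :=
  match n with
  | 0 => [:: 1]
  | n'.+1 =>
      let s := bern_seq n' in
      rcons s (- (\sum_(j < n'.+1) ('C(n'.+2, j))%:R * s`_j) / (n'.+2)%:R)
  end.

Definition bernoulli (m : nat) : rat := (bern_seq m)`_m.

(* trinomial coefficient n!/(r1! r2! r3!) (used only with r1+r2+r3 = n) *)
Definition trinomial (n r1 r2 r3 : nat) : nat :=
  (n`! %/ (r1`! * r2`! * r3`!))%N.

(* Writing the trinomial coefficient as C(2k+2, 2t) C(2k+2-2t, 2i+1), the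
   inner sum over i is a sum of odd-index binomial coefficients, equal to
   2^(2(k-t)+1); the powers of 2 combine into 2^(2k+1), and what remains is
   sum_t C(2k+2, 2t) B_(2t).  By the defining recurrence
   sum_(j < 2k+2) C(2k+2, j) B_j = 0 this equals k+1, because the odd Bernoulli
   numbers vanish except B_1 = -1/2.  That vanishing is the identity
   (-1)^m B_m = B_m + [m = 1]: binomial inversion of the recurrence shows that
   both sides have the same binomial transform. *)

From HB Require Import structures.
From mathcomp Require Import all_boot all_order all_algebra.
From mathcomp Require Import ring lra zify.
Import Order.TTheory GRing.Theory Num.Theory.
Local Open Scope ring_scope.

Lemma size_bern_seq n : size (bern_seq n) = n.+1.
Proof. by elim: n => [|n IH] //=; rewrite size_rcons IH. Qed.

Lemma nth_bern_seq n j : (j <= n)%N -> (bern_seq n)`_j = bernoulli j.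
Proof.
elim: n => [|n IH]; first by rewrite leqn0 => /eqP ->.
rewrite leq_eqVlt => /orP [/eqP -> //| ltjn].
by rewrite /= nth_rcons size_bern_seq ltjn IH.
Qed.

Lemma bernoulliS n : bernoulli n.+1 =
  - (\sum_(j < n.+1) 'C(n.+2, j)%:R * bernoulli j) / n.+2%:R.
Proof.
rewrite /bernoulli /= nth_rcons size_bern_seq ltnn eqxx.
by congr (- _ / _); apply: eq_bigr => j _; rewrite nth_bern_seq // -ltnS.
Qed.

Lemma sum_bin_bernoulli n :
  \sum_(j < n) 'C(n, j)%:R * bernoulli j = (n == 1)%:R.
Proof.
case: n => [|[|n]]; first by rewrite big_ord0.
  by rewrite big_ord1 mul1r.
rewrite big_ord_recr /= binSn bernoulliS.
by field; rewrite -[2]/(2%N%:R) -natrD pnatr_eq0.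
Qed.

Lemma sum_alt_bin (R : comPzRingType) N :
  \sum_(i < N.+1) (-1) ^+ i * 'C(N, i)%:R = (N == 0)%:R :> R.
Proof.
have := exprBn (1 : R) 1 N; rewrite subrr expr0n => ->.
by apply: eq_bigr => i _; rewrite !expr1n !mulr1 mulr_natr.
Qed.

Lemma mul_bin_sub n m j : (j <= m <= n)%N ->
  ('C(n, m) * 'C(m, j) = 'C(n, j) * 'C(n - j, m - j))%N.
Proof.
move=> /andP[le_jm le_mn].
apply/eqP; rewrite -(@eqn_pmul2r (j`! * (m - j)`! * (n - m)`!)); last first.
  by rewrite !muln_gt0 !fact_gt0.
have nm_eq : (n - j - (m - j) = n - m)%N by lia.
have fact_m := bin_fact le_jm.
have fact_n := bin_fact le_mn.
have fact_nj : ('C(n, j) * (j`! * (n - j)`!) = n`!)%N by apply: bin_fact; lia.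
have fact_n_j : ('C(n - j, m - j) * ((m - j)`! * (n - m)`!) = (n - j)`!)%N.
  by rewrite -nm_eq bin_fact //; lia.
apply/eqP; transitivity ('C(n, m) * ('C(m, j) * (j`! * (m - j)`!)) * (n - m)`!)%N.
  by ring.
rewrite fact_m -mulnA fact_n -fact_nj -fact_n_j; ring.
Qed.

Lemma sum_alt_bin_mul_bin (R : comPzRingType) n j : (j <= n)%N ->
  \sum_(m < n.+1) (-1) ^+ m * ('C(n, m) * 'C(m, j))%:R = (-1) ^+ j * (n == j)%:R :> R.
Proof.
move=> le_jn.
rewrite -(big_mkord xpredT (fun m => (-1) ^+ m * ('C(n, m) * 'C(m, j))%:R)).
rewrite (big_cat_nat _ (n := j)) //=; last by rewrite ltnW.
rewrite big_nat big1 ?add0r; last first.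
  by move=> m /andP[_ lt_mj]; rewrite (bin_small lt_mj) muln0 mulr0.
rewrite (big_addn 0 n.+1 j) (subSn le_jn) big_mkord.
transitivity ((-1) ^+ j * 'C(n, j)%:R * \sum_(i < (n - j).+1) (-1) ^+ i * 'C(n - j, i)%:R : R).
  rewrite mulr_sumr; apply: eq_bigr => i _.
  have le_ij_n : (i + j <= n)%N by have := ltn_ord i; lia.
  by rewrite mul_bin_sub ?leq_addl // addnK natrM exprD; ring.
rewrite sum_alt_bin subn_eq0; have [le_nj | lt_jn] := leqP n j.
  have -> : n = j by apply/eqP; rewrite eqn_leq le_nj.
  by rewrite binn eqxx !mulr1.
by rewrite (gtn_eqF lt_jn) !mulr0.
Qed.

Lemma sum_bin_bernoulli_widen n m : (m <= n)%N ->
  \sum_(j < n.+1) 'C(m, j)%:R * bernoulli j = (m == 1)%:R + bernoulli m.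
Proof.
move=> le_mn; transitivity (\sum_(j < m.+1) 'C(m, j)%:R * bernoulli j).
  rewrite [RHS](big_ord_widen n.+1 (fun j => 'C(m, j)%:R * bernoulli j)) // [RHS]big_mkcond.
  by apply: eq_bigr => j _; case: ltnP => // lt_mj; rewrite bin_small // mul0r.
by rewrite big_ord_recr /= sum_bin_bernoulli binn mul1r.
Qed.

Lemma sum_bin_alt_bernoulli n :
  \sum_(j < n) 'C(n, j)%:R * ((-1) ^+ j * bernoulli j) = n%:R.
Proof.
(* Evaluate X summing over j first (the recurrence) and over m first
   (orthogonality of alternating binomial coefficients). *)
pose X := \sum_(m < n.+1) (-1) ^+ m * 'C(n, m)%:R *
            \sum_(j < n.+1) 'C(m, j)%:R * bernoulli j.
have X_first : X = - n%:R + \sum_(m < n.+1) 'C(n, m)%:R * ((-1) ^+ m * bernoulli m).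
  rewrite /X (eq_bigr (fun m : 'I_n.+1 => (-1) ^+ m * 'C(n, m)%:R * (m == 1%N :> nat)%:R +
    'C(n, m)%:R * ((-1) ^+ m * bernoulli m))); last first.
    by move=> m _; rewrite sum_bin_bernoulli_widen -1?ltnS //; ring.
  rewrite big_split /=; congr (_ + _); clear X.
  case: n => [|n]; first by rewrite big_ord1 mulr0 oppr0.
  rewrite 2!big_ord_recl big1 => [|m _]; last by rewrite mulr0.
  by rewrite /= bin1 expr1 !mulr0 !mulr1 add0r addr0 mulN1r.
have X_second : X = (-1) ^+ n * bernoulli n.
  rewrite /X (eq_bigr (fun m : 'I_n.+1 => \sum_(j < n.+1)
     (-1) ^+ m * ('C(n, m) * 'C(m, j))%:R * bernoulli j)); last first.
    by move=> m _; rewrite mulr_sumr; apply: eq_bigr => j _; rewrite natrM; ring.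
  rewrite exchange_big /= big_ord_recr big1 /= => [|j _]; last first.
    have /gtn_eqF n_neq_j := ltn_ord j.
    by rewrite -mulr_suml sum_alt_bin_mul_bin ?(ltnW (ltn_ord j)) // n_neq_j !mulr0 mul0r.
  by rewrite add0r -big_distrl /= sum_alt_bin_mul_bin // eqxx mulr1.
by move: X_second; rewrite X_first big_ord_recr /= binn mul1r; lra.
Qed.

Lemma binomial_transform_eq0 (R : numDomainType) (d : nat -> R) :
  d 0 = 0 -> (forall n, \sum_(j < n.+2) 'C(n.+2, j)%:R * d j = 0) ->
  forall m, d m = 0.
Proof.
move=> d0 sum_d0; elim/ltn_ind => -[//|n] IH.
have := sum_d0 n; rewrite big_ord_recr big1 /= => [|j _]; last first.
  by rewrite IH ?mulr0 // ltnS ltnW.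
by rewrite add0r binSn => /eqP; rewrite mulf_eq0 pnatr_eq0 => /eqP.
Qed.

Lemma bernoulli_sign m : (-1) ^+ m * bernoulli m = bernoulli m + (m == 1)%:R.
Proof.
apply/eqP; rewrite -subr_eq0; apply/eqP; move: m.
apply: binomial_transform_eq0 => [|n].
  by rewrite expr0 mul1r addr0 subrr.
under eq_bigr => j _ do rewrite mulrBr mulrDr.
rewrite sumrB big_split /= sum_bin_alt_bernoulli sum_bin_bernoulli /=.
rewrite 2!big_ord_recl big1 => [|j _]; last by rewrite mulr0.
by rewrite /= bin1 !mulr0 !mulr1 !add0r !addr0 subrr.
Qed.

Lemma bernoulli_odd i : bernoulli (2 * i).+1 = - (i == 0)%:R / 2.
Proof.
have := bernoulli_sign (2 * i).+1.
rewrite exprS exprM sqrrN expr1n mulr1.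
by case: i => [|i] /=; lra.
Qed.

Lemma big_ord_double {R : Type} {idx : R} {op : Monoid.law idx} n (F : nat -> R) :
  \big[op/idx]_(j < 2 * n) F j = \big[op/idx]_(i < n) op (F (2 * i)%N) (F (2 * i).+1).
Proof.
elim: n => [|n IH]; first by rewrite !big_ord0.
by rewrite mulnS add2n !big_ord_recr /= IH Monoid.mulmA.
Qed.

Lemma sum_bin_bernoulli_even k :
  \sum_(t < k.+1) 'C(2 * k.+1, 2 * t)%:R * bernoulli (2 * t) = k.+1%:R.
Proof.
have := sum_bin_bernoulli (2 * k.+1).
rewrite (big_ord_double _ (fun j => 'C(2 * k.+1, j)%:R * bernoulli j)) big_split /=.
rewrite [X in _ + X]big_ord_recl [X in _ + (_ + X)]big1 => [|i _]; last first.
  by rewrite /= bernoulli_odd /= oppr0 mul0r mulr0.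
rewrite bernoulli_odd bin1 addr0 natrM [in X in _ = X -> _]mulnS add2n /=; lra.
Qed.

Lemma trinomialE n a b : (a + b <= n)%N ->
  trinomial n a b (n - a - b) = ('C(n, a) * 'C(n - a, b))%N.
Proof.
move=> le_abn; rewrite /trinomial.
have fact_n : ('C(n, a) * (a`! * (n - a)`!) = n`!)%N by apply: bin_fact; lia.
have fact_na : ('C(n - a, b) * (b`! * (n - a - b)`!) = (n - a)`!)%N.
  by apply: bin_fact; lia.
rewrite -fact_n -fact_na.
rewrite (_ : (_ * _ = 'C(n, a) * 'C(n - a, b) * (a`! * b`! * (n - a - b)`!))%N); last by ring.
by rewrite mulnK // !muln_gt0 !fact_gt0.
Qed.

Lemma sum_bin_odd m : (\sum_(i < m.+1) 'C((2 * m).+2, (2 * i).+1) = 2 ^ (2 * m).+1)%N.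
Proof.
under eq_bigr => i _ do rewrite binS addnC.
rewrite -(big_ord_double _ (fun j => 'C((2 * m).+1, j))) mulnS add2n.
transitivity ((1 + 1) ^ (2 * m).+1)%N; last by [].
rewrite expnDn.
by apply: eq_bigr => j _; rewrite !exp1n !muln1.
Qed.

Lemma sum_trinomial_odd k t : (t <= k)%N ->
  (\sum_(i < k.+1 | i + t <= k)
     trinomial (2 * k + 2) (2 * t) (2 * i + 1) (2 * k - 2 * t - 2 * i + 1)
   = 'C(2 * k.+1, 2 * t) * 2 ^ (2 * (k - t)).+1)%N.
Proof.
move=> le_tk; rewrite -sum_bin_odd big_distrr /=.
pose F i := ('C(2 * k.+1, 2 * t) * 'C((2 * (k - t)).+2, (2 * i).+1))%N.
rewrite [RHS](big_ord_widen k.+1 F); last by rewrite ltnS leq_subr.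
apply: eq_big => [i | i le_itk]; first by rewrite ltnS leq_subRL // addnC.
rewrite (_ : 2 * k - 2 * t - 2 * i + 1 = 2 * k + 2 - 2 * t - (2 * i + 1))%N; last by lia.
rewrite trinomialE; last by lia.
have -> : (2 * k + 2 = 2 * k.+1)%N by lia.
have -> : (2 * k.+1 - 2 * t = (2 * (k - t)).+2)%N by lia.
by rewrite addn1.
Qed.

Theorem mainTheorem3 (k : nat) (hk : (0 < k)%N) :
  \sum_(t < k.+1) \sum_(i < k.+1 | (i + t <= k)%N)
     bernoulli (2 * t) * 2%:R ^+ (2 * t)
       * (trinomial (2 * k + 2) (2 * t) (2 * i + 1) (2 * k - 2 * t - 2 * i + 1))%:R
  = 2%:R ^+ (2 * k + 1) * (k.+1)%:R.
Proof.
rewrite -(sum_bin_bernoulli_even k) mulr_sumr; apply: eq_bigr => t _.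
have le_tk : (t <= k)%N by rewrite -ltnS.
rewrite -mulr_sumr -natr_sum sum_trinomial_odd // natrM natrX.
have -> : (2 * k + 1 = 2 * t + (2 * (k - t)).+1)%N by lia.
by rewrite exprD; ring.
Qed.
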